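(* Let $n_q\ge 1$ and let $u:\{1,\dots,n_q\}\times\{1,\dots,n_q\}\to\mathbb{R}$ be such that for every item $i$, $u(i,\cdot)$ is monotonically decreasing in the position argument. Let $s_1,\dots,s_{n_q}$ be pairwise distinct real scores and let $k_i\in\{1,\dots,n_q\}$ be the position of item $i$ when items are sorted by score in descending order (so $k_i = 1+|\{j: s_j>s_i\}|$). Let $k^*=(k^*_1,\dots,k^*_{n_q})$ be a permutation of $\{1,\dots,n_q\}$ maximizing $\sum_{i=1}^{n_q} u(i,k^*_i)$. Define $$\mathcal{L}_r = \sum_{i=1}^{n_q} u(i,k_i^* ) - \sum_{i=1}^{n_q} u(i,k_i), \qquad \mathcal{L}''_r = \sum_{i=1}^{n_q}\sum_{j:\,s_i<s_j} \left|u(i,k_j)-u(i,k_i)\right|.$$ Then $\mathcal{L}_r \le \mathcal{L}''_r$.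
   Context: In the intended application, $u(i,k)=c_{i,k_i^h}\cdot \frac{P(c_{i,k}=1)}{P(c_{i,k_i^h}=1)}\cdot b_i$ is the (debiased) utility of displaying item $i$ at position $k$ ($k_i^h$ the logged position, $c_{i,k_i^h}$ the observed click, $b_i$ the item's utility value), $s_i=\Phi(f_i,b_i)$ are scores of a scoring function $\Phi$, and $k^*$ is the optimal (maximum-weight matching) assignment of items to positions; $\mathcal{L}_r$ is the utility regret of the ranking induced by the scores. *)

From mathcomp Require Import all_boot all_order all_algebra all_fingroup.
Set Implicit Arguments. Unset Strict Implicit. Unset Printing Implicit Defensive.
Import Order.TTheory GRing.Theory Num.Theory.
Local Open Scope ring_scope.

(* Positions are 0-indexed: paper's position k corresponds to ordinal k-1.
   n_q = n.+1 items. *)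

Definition rank_pos (R : realFieldType) (n : nat) (s : 'I_n.+1 -> R)
  (i : 'I_n.+1) : 'I_n.+1 :=
  inord #|[set j | s i < s j]|.

(* The bound holds item by item, whatever the permutation k*.  The top-scored
   item is ranked first, the best position for every decreasing utility; so
   for an item i below it, the summand for j = top already dominates
   u(i, k*_i) - u(i, k_i), and for the top item itself that difference is
   nonpositive. *)
From mathcomp Require Import all_boot all_order all_algebra all_fingroup.
Import Order.TTheory GRing.Theory Num.Theory.
Local Open Scope ring_scope.

Section RankPosition.

Variables (R : realFieldType) (n : nat) (s : 'I_n.+1 -> R).

Lemma rank_pos_max (x : 'I_n.+1) : (forall j, s j <= s x) -> rank_pos s x = ord0.
Proof.
move=> s_max; apply/val_inj; rewrite /rank_pos.
have -> : [set j | s x < s j] = set0 by apply/setP => j; rewrite !inE ltNge s_max.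
by rewrite cards0 /= inordK.
Qed.

Lemma sub_rank_pos_le_sum (f : 'I_n.+1 -> R)
    (f_decr : forall k l : 'I_n.+1, (k <= l)%N -> f l <= f k) (k i : 'I_n.+1) :
  f k - f (rank_pos s i)
  <= \sum_(j | s i < s j) `|f (rank_pos s j) - f (rank_pos s i)|.
Proof.
have f_le0 : f k <= f ord0 by apply: f_decr.
have [top _ s_top] := @arg_maxP _ _ _ ord0 predT s isT.
have rank_top : rank_pos s top = ord0 by apply: rank_pos_max => j; apply: s_top.
case: (ltP (s i) (s top)) => [lt_i_top | le_top_i].
- rewrite (bigD1 top) //= rank_top.
  apply: le_trans (_ : `|f ord0 - f (rank_pos s i)| <= _).
    by apply: le_trans (ler_norm _); rewrite lerD2r.
  by rewrite lerDl; apply: sumr_ge0.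
- have -> : rank_pos s i = ord0.
    by apply: rank_pos_max => j; apply: le_trans (s_top j _) le_top_i.
  by apply: le_trans (sumr_ge0 _ _) => //; rewrite subr_le0.
Qed.

End RankPosition.

Theorem theorem2 (R : realFieldType) (n : nat)
  (u : 'I_n.+1 -> 'I_n.+1 -> R)
  (u_decr : forall (i k l : 'I_n.+1), (k <= l)%N -> u i l <= u i k)
  (s : 'I_n.+1 -> R) (s_inj : injective s)
  (kstar : {perm 'I_n.+1})
  (kstar_opt : forall tau : {perm 'I_n.+1},
      \sum_i u i (tau i) <= \sum_i u i (kstar i)) :
  \sum_i u i (kstar i) - \sum_i u i (rank_pos s i)
  <= \sum_i \sum_(j | s i < s j) `|u i (rank_pos s j) - u i (rank_pos s i)|.
Proof.
rewrite -sumrB; apply: ler_sum => i _.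
exact: sub_rank_pos_le_sum (u_decr i) _ _.
Qed.
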